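(* Let $E$ be an elliptic curve over $\mathbb{Q}$ in short Weierstrass form $y^2=x^3+Ax+B$ with $A,B\in\mathbb{Q}$. Suppose $E(\mathbb{R})$ has two connected components, and let $E^B(\mathbb{R})$ denote the bounded one. Then every rational point $Q\in E(\mathbb{Q})\cap E^B(\mathbb{R})$ satisfies $$\log|x(Q)|\le 4h(E).$$
   Context: For a rational number $a/b$ in lowest terms, $h(a/b)=\log\max\{|a|,|b|\}$. Let $\Delta=-16(4A^3+27B^2)$ be the discriminant of $E$ and $j=-1728(4A)^3/\Delta$ its $j$-invariant. The height of $E$ is $h(E)=\frac{1}{12}\max\{h(j),h(\Delta)\}$. *)

From Stdlib Require Import Reals QArith Qreals ZArith.
Open Scope R_scope.

Definition hQ (q : Q) : R :=
  let r := Qred q in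
  ln (IZR (Z.max (Z.abs (Qnum r)) (Zpos (Qden r)))).

Definition discE (A B : Q) : Q :=
  ((-16) * (4 * (A * A * A) + 27 * (B * B)))%Q.
Definition jE (A B : Q) : Q :=
  ((-1728) * ((4 * A) * (4 * A) * (4 * A)) / discE A B)%Q.

Definition hE (A B : Q) : R := / 12 * Rmax (hQ (jE A B)) (hQ (discE A B)).

Definition on_curve (A B : Q) (p : R * R) : Prop :=
  let (x, y) := p in y ^ 2 = x ^ 3 + Q2R A * x + Q2R B.

Definition open2 (U : R * R -> Prop) : Prop :=
  forall p, U p -> exists eps, eps > 0 /\
    forall q, Rabs (fst q - fst p) < eps -> Rabs (snd q - snd p) < eps -> U q.

Definition connected2 (C : R * R -> Prop) : Prop :=
  forall U V, open2 U -> open2 V ->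
    (forall p, C p -> U p \/ V p) ->
    (exists p, C p /\ U p) -> (exists p, C p /\ V p) ->
    exists p, C p /\ U p /\ V p.

Definition same_comp (S : R * R -> Prop) (p q : R * R) : Prop :=
  exists C : R * R -> Prop, (forall r, C r -> S r) /\ connected2 C /\ C p /\ C q.

Definition component (S : R * R -> Prop) (p : R * R) : R * R -> Prop :=
  fun q => S p /\ same_comp S p q.

Definition two_components (S : R * R -> Prop) : Prop :=
  exists p q, S p /\ S q /\ ~ same_comp S p q /\
    forall r, S r -> same_comp S r p \/ same_comp S r q.

Definition bounded2 (C : R * R -> Prop) : Prop :=
  exists M, forall p, C p -> Rabs (fst p) <= M /\ Rabs (snd p) <= M.

From Stdlib Require Import Reals QArith Qreals Lra Psatz Classical.
Open Scope R_scope.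

(* Write f(t) = t^3 + A t + B and let Q = (x, y) be a rational point on the
   bounded real component of E.

   1. Topology.  The graph of a continuous function over a half-line [x0, +oo)
      is connected (a supremum argument).  If f >= 0 on [x, +oo), one of the
      two branches t |-> +-sqrt (f t) over [x, +oo) passes through Q and lies on
      the curve, so the component of Q would be unbounded.  Hence f(t) < 0 for
      some t > x.
   2. Algebra.  From f(t) - f(x) = (t - x)(t^2 + t x + x^2 + A) = f(t) - y^2 < 0
      we get t^2 + t x + x^2 + A < 0, whence 3 x^2 < -4 A (so A < 0).
   3. Heights.  j * Delta = -1728 (4A)^3 = 110592 (-A)^3 > (64/27) (-A)^3 > x^6,
      so 6 log|x| < log|j| + log|Delta| <= 2 max(h(j), h(Delta)) = 24 h(E),
      using log|q| <= h(q) for every nonzero rational q. *)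

Lemma open2_along_graph (W : R * R -> Prop) (h : R -> R) (c : R) :
  open2 W -> continuity_pt h c -> W (c, h c) ->
  exists d, d > 0 /\ forall t, Rabs (t - c) < d -> W (t, h t).
Proof.
  intros HW Hc Wc. destruct (HW _ Wc) as [e [He HWe]].
  destruct (Hc e He) as [d [Hd Hhd]].
  exists (Rmin e d). split; [apply Rmin_pos; lra|].
  intros t Ht. apply HWe; simpl.
  - apply Rlt_le_trans with (Rmin e d); [exact Ht | apply Rmin_l].
  - destruct (Req_dec t c) as [-> | Hne].
    + rewrite Rminus_diag, Rabs_R0; lra.
    + apply (Hhd t). split; [unfold D_x, no_cond; split; auto|].
      simpl. unfold R_dist. apply Rlt_le_trans with (Rmin e d); [exact Ht | apply Rmin_r].
Qed.

(* The crossing point is the supremum of the graph points lying in U. *)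
Lemma graph_crossing (U V : R * R -> Prop) (h : R -> R) (a b : R) :
  open2 U -> open2 V -> (forall t, continuity_pt h t) -> a <= b ->
  (forall t, a <= t <= b -> U (t, h t) \/ V (t, h t)) ->
  U (a, h a) -> V (b, h b) ->
  exists t, a <= t <= b /\ U (t, h t) /\ V (t, h t).
Proof.
  intros HU HV Hc Hab Hcov Ua Vb.
  set (E := fun t => a <= t <= b /\ U (t, h t)).
  assert (HE : exists t, E t) by (exists a; split; [lra | exact Ua]).
  assert (HEb : bound E) by (exists b; intros t [Ht _]; lra).
  destruct (completeness E HEb HE) as [c [Hub Hlub]].
  assert (Hac : a <= c) by (apply Hub; split; [lra | exact Ua]).
  assert (Hcb : c <= b) by (apply Hlub; intros t [Ht _]; lra).
  destruct (Hcov c (conj Hac Hcb)) as [Uc | Vc].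
  - (* c in U: c must be b, otherwise U contains graph points beyond c *)
    destruct (Req_dec c b) as [-> | Hne]; [exists b; split; [lra | auto]|].
    exfalso. destruct (open2_along_graph U h c HU (Hc c) Uc) as [d [Hd Hnear]].
    set (t := Rmin b (c + d / 2)).
    assert (Hct : c < t) by (unfold t; apply Rmin_glb_lt; lra).
    assert (Htb : t <= b) by apply Rmin_l.
    assert (Htd : t <= c + d / 2) by apply Rmin_r.
    assert (Et : E t) by (split; [lra | apply Hnear; rewrite Rabs_right; lra]).
    specialize (Hub t Et). lra.
  - (* c in V: points of E arbitrarily close below c are in V as well *)
    destruct (open2_along_graph V h c HV (Hc c) Vc) as [d [Hd Hnear]].
    destruct (classic (exists t, E t /\ c - d < t)) as [[t [[Ht Ut] Htc]] | Hfar].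
    + exists t. repeat split; try tauto.
      apply Hnear. assert (t <= c) by (apply Hub; split; assumption).
      rewrite Rabs_left1; lra.
    + exfalso. assert (c <= c - d); [|lra].
      apply Hlub. intros t Et. apply Rnot_lt_le. intro Hlt. apply Hfar. eauto.
Qed.

Lemma graph_connected (h : R -> R) (x0 : R) :
  (forall t, continuity_pt h t) ->
  connected2 (fun p => x0 <= fst p /\ snd p = h (fst p)).
Proof.
  intros Hc U V HU HV Hcov [[p1 q1] [[H1 E1] U1]] [[p2 q2] [[H2 E2] V2]].
  simpl in *. subst q1 q2.
  assert (Hcov' : forall t, x0 <= t -> U (t, h t) \/ V (t, h t))
    by (intros t Ht; apply (Hcov (t, h t)); simpl; auto).
  destruct (Rle_dec p1 p2) as [Hle | Hlt].
  - destruct (graph_crossing U V h p1 p2) as [t [Ht [Ut Vt]]]; auto.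
    { intros t Ht. apply Hcov'. lra. }
    exists (t, h t). simpl. repeat split; auto. lra.
  - destruct (graph_crossing V U h p2 p1) as [t [Ht [Vt Ut]]]; auto; [lra| |].
    { intros t Ht. destruct (Hcov' t); [lra | right | left]; auto. }
    exists (t, h t). simpl. repeat split; auto. lra.
Qed.

Definition branch (s : R) (f : R -> R) (t : R) : R := s * sqrt (Rabs (f t)).

Lemma branch_continuous (s : R) (f : R -> R) :
  (forall t, continuity_pt f t) -> forall t, continuity_pt (branch s f) t.
Proof.
  intros Hf t. unfold branch.
  apply continuity_pt_mult; [apply continuity_pt_const; intros ??; reflexivity|].
  apply continuity_pt_comp with (f1 := fun t => Rabs (f t)).
  - apply continuity_pt_comp with (f1 := f); [apply Hf | apply Rcontinuity_abs].
  - apply continuity_pt_sqrt, Rabs_pos.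
Qed.

Lemma branch_sq (s : R) (f : R -> R) (t : R) :
  s * s = 1 -> 0 <= f t -> branch s f t ^ 2 = f t.
Proof.
  intros Hs Hft. unfold branch. rewrite Rabs_right by lra.
  replace ((s * sqrt (f t)) ^ 2) with ((s * s) * (sqrt (f t) * sqrt (f t))) by ring.
  rewrite sqrt_sqrt, Hs by exact Hft. ring.
Qed.

Lemma branch_through (f : R -> R) (x y : R) :
  y ^ 2 = f x -> branch (if Rle_dec 0 y then 1 else -1) f x = y.
Proof.
  intro Hxy. unfold branch. rewrite <- Hxy, Rabs_right by (apply Rle_ge, pow2_ge_0).
  replace (y ^ 2) with (Rsqr y) by (unfold Rsqr; ring). rewrite sqrt_Rsqr_abs.
  destruct (Rle_dec 0 y).
  - rewrite Rabs_right; lra.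
  - rewrite Rabs_left; lra.
Qed.

Lemma nonneg_tail_unbounded (S : R * R -> Prop) (f : R -> R) (x y : R) :
  (forall t, continuity_pt f t) ->
  (forall p, snd p ^ 2 = f (fst p) -> S p) ->
  y ^ 2 = f x -> (forall t, x <= t -> 0 <= f t) ->
  ~ bounded2 (component S (x, y)).
Proof.
  intros Hf HS Hxy Hpos [M HM].
  set (s := if Rle_dec 0 y then 1 else -1).
  assert (Hs : s * s = 1) by (unfold s; destruct (Rle_dec 0 y); lra).
  set (C := fun p : R * R => x <= fst p /\ snd p = branch s f (fst p)).
  set (t := Rmax x (Rabs M + 1)).
  assert (Hcomp : component S (x, y) (t, branch s f t)).
  { split; [apply HS; exact Hxy|]. exists C. repeat split.
    - intros [p q] [Hp Hq]. simpl in Hp, Hq. subst q. apply HS. simpl. apply branch_sq; auto.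
    - apply graph_connected, branch_continuous, Hf.
    - simpl; lra.
    - symmetry. apply branch_through, Hxy.
    - apply Rmax_l. }
  destruct (HM _ Hcomp) as [Ht _]. simpl in Ht.
  assert (Rabs M + 1 <= t) by apply Rmax_r. pose proof (Rle_abs M). pose proof (Rle_abs t). lra.
Qed.

Definition cubic (A B : Q) (t : R) : R := t ^ 3 + Q2R A * t + Q2R B.

Lemma cubic_continuous (A B : Q) : forall t, continuity_pt (cubic A B) t.
Proof.
  intro t. unfold cubic. repeat apply continuity_pt_plus.
  - apply derivable_continuous_pt, derivable_pt_pow.
  - apply continuity_pt_mult; [apply continuity_pt_const; intros ??; reflexivity|].
    apply derivable_continuous_pt, derivable_pt_id.
  - apply continuity_pt_const. intros ??; reflexivity.
Qed.

Lemma bounded_component_dips (A B : Q) (x y : R) :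
  on_curve A B (x, y) -> bounded2 (component (on_curve A B) (x, y)) ->
  exists t, x < t /\ cubic A B t < 0.
Proof.
  intros Hon Hbdd. apply NNPP. intro Hnodip.
  apply (nonneg_tail_unbounded (on_curve A B) (cubic A B) x y); auto.
  - apply cubic_continuous.
  - intros [p q]; exact (fun H => H).
  - intros t Ht. destruct (Rle_lt_or_eq_dec _ _ Ht) as [Hlt | <-].
    + apply Rnot_lt_le. intro Hneg. apply Hnodip. eauto.
    + unfold cubic. rewrite <- Hon. apply pow2_ge_0.
Qed.

Lemma dip_bounds_abscissa (a b x y t : R) :
  y ^ 2 = x ^ 3 + a * x + b -> x < t -> t ^ 3 + a * t + b < 0 ->
  3 * x ^ 2 < -4 * a.
Proof.
  intros Hxy Hxt Hdip.
  assert (Hprod : (t - x) * (t ^ 2 + t * x + x ^ 2 + a) < 0).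
  { replace ((t - x) * (t ^ 2 + t * x + x ^ 2 + a))
      with ((t ^ 3 + a * t + b) - (x ^ 3 + a * x + b)) by ring.
    rewrite <- Hxy. pose proof (pow2_ge_0 y). lra. }
  assert (Hq : t ^ 2 + t * x + x ^ 2 + a < 0).
  { apply Rnot_le_lt. intro Hge.
    assert (0 <= (t - x) * (t ^ 2 + t * x + x ^ 2 + a)) by (apply Rmult_le_pos; lra).
    lra. }
  pose proof (pow2_ge_0 (t + x / 2)). nra.
Qed.

Lemma ln_le_compat (x y : R) : 0 < x -> x <= y -> ln x <= ln y.
Proof.
  intros Hx Hxy. destruct (Rle_lt_or_eq_dec _ _ Hxy) as [H | <-].
  - left. apply ln_increasing; auto.
  - right. reflexivity.
Qed.

(* The total logarithm vanishes at 0, which handles the point with x = 0. *)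
Lemma ln_0 : ln 0 = 0.
Proof. unfold ln. destruct (Rlt_dec 0 0) as [H | _]; [exfalso; lra | reflexivity]. Qed.

Lemma hQ_nonneg (q : Q) : 0 <= hQ q.
Proof.
  unfold hQ. destruct (Qred q) as [n d]. simpl. rewrite <- ln_1.
  apply ln_le_compat; [lra | apply IZR_le; lia].
Qed.

Lemma ln_abs_le_hQ (q : Q) : Q2R q <> 0 -> ln (Rabs (Q2R q)) <= hQ q.
Proof.
  unfold hQ. rewrite (Qeq_eqR _ _ (Qeq_sym _ _ (Qred_correct q))).
  destruct (Qred q) as [n d]. unfold Q2R. simpl. intro Hne.
  assert (Hd : 1 <= IZR (Z.pos d)) by (apply IZR_le; lia).
  assert (Hn : Rabs (IZR n) <= IZR (Z.max (Z.abs n) (Z.pos d)))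
    by (rewrite Rabs_Zabs; apply IZR_le; lia).
  apply ln_le_compat; [apply Rabs_pos_lt; exact Hne|].
  rewrite Rabs_mult, Rabs_inv, (Rabs_right (IZR (Z.pos d))) by lra.
  apply Rle_trans with (Rabs (IZR n)); [|exact Hn].
  rewrite <- (Rmult_1_r (Rabs (IZR n))) at 2.
  apply Rmult_le_compat_l; [apply Rabs_pos|].
  rewrite <- Rinv_1. apply Rinv_le_contravar; lra.
Qed.

Lemma Q2R_int (z : Z) : Q2R (Qmake z 1) = IZR z.
Proof. unfold Q2R. simpl. lra. Qed.

Lemma Q2R_discE (A B : Q) :
  Q2R (discE A B) = -16 * (4 * (Q2R A * Q2R A * Q2R A) + 27 * (Q2R B * Q2R B)).
Proof.
  unfold discE. rewrite !Q2R_mult, Q2R_plus, !Q2R_mult.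
  rewrite !Q2R_int. ring.
Qed.

Lemma discE_nonzero (A B : Q) :
  ~ (4 * (A * A * A) + 27 * (B * B) == 0)%Q -> Q2R (discE A B) <> 0.
Proof.
  intros Hns Hz. apply Hns, eqR_Qeq. rewrite Q2R_discE in Hz.
  rewrite Q2R_plus, !Q2R_mult, !Q2R_int. lra.
Qed.

Lemma jE_mul_discE (A B : Q) :
  Q2R (discE A B) <> 0 -> Q2R (jE A B) * Q2R (discE A B) = -1728 * (4 * Q2R A) ^ 3.
Proof.
  intro HD. assert (HDq : ~ (discE A B == 0)%Q)
    by (intro Hq; apply HD; rewrite Hq, Q2R_int; reflexivity).
  unfold jE. rewrite Q2R_div by exact HDq. rewrite !Q2R_mult.
  rewrite !Q2R_int. field. exact HD.
Qed.

Lemma ln_abs_le_of_sixth_power (x u v M : R) :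
  x <> 0 -> u <> 0 -> v <> 0 -> Rabs x ^ 6 <= Rabs u * Rabs v ->
  ln (Rabs u) <= M -> ln (Rabs v) <= M -> ln (Rabs x) <= M / 3.
Proof.
  intros Hx Hu Hv H6 HuM HvM.
  assert (Hax : 0 < Rabs x) by (apply Rabs_pos_lt; exact Hx).
  assert (Hln : ln (Rabs x ^ 6) <= ln (Rabs u) + ln (Rabs v)).
  { rewrite <- ln_mult by (apply Rabs_pos_lt; assumption).
    apply ln_le_compat; [apply pow_lt; exact Hax | exact H6]. }
  rewrite ln_pow in Hln by exact Hax. simpl INR in Hln. lra.
Qed.

(* 3 x^2 < -4a forces x^6 < (64/27) (-a)^3 <= |j| |Delta| = 110592 (-a)^3. *)
Lemma sixth_power_le_j_disc (a x j D : R) :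
  3 * x ^ 2 < -4 * a -> j * D = -1728 * (4 * a) ^ 3 ->
  Rabs x ^ 6 <= Rabs j * Rabs D.
Proof.
  intros Hx HjD.
  assert (Ha3 : 0 < (- a) ^ 3) by (apply pow_lt; pose proof (pow2_ge_0 x); lra).
  assert (HjD' : j * D = 110592 * (- a) ^ 3) by (rewrite HjD; ring).
  rewrite <- Rabs_mult, HjD', (Rabs_right (110592 * _)) by lra.
  replace (Rabs x ^ 6) with ((x ^ 2) ^ 3) by (rewrite <- pow2_abs, <- pow_mult; reflexivity).
  apply Rle_trans with ((-4 * a / 3) ^ 3).
  - apply pow_incr. split; [apply pow2_ge_0 | lra].
  - replace ((-4 * a / 3) ^ 3) with (64 / 27 * (- a) ^ 3) by field. lra.
Qed.

Theorem proposition2p2 (A B : Q)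
  (hns : ~ (4 * (A * A * A) + 27 * (B * B) == 0)%Q)
  (h2 : two_components (on_curve A B))
  (xQ yQ : Q)
  (hQon : on_curve A B (Q2R xQ, Q2R yQ))
  (hbdd : bounded2 (component (on_curve A B) (Q2R xQ, Q2R yQ))) :
  ln (Rabs (Q2R xQ)) <= 4 * hE A B.
Proof.
  destruct (bounded_component_dips A B _ _ hQon hbdd) as [t [Hxt Hdip]].
  pose proof (dip_bounds_abscissa _ _ _ _ _ hQon Hxt Hdip) as Hx2.
  pose proof (discE_nonzero A B hns) as HD.
  pose proof (jE_mul_discE A B HD) as HjD.
  assert (Hj : Q2R (jE A B) <> 0).
  { intro Hz. rewrite Hz in HjD. pose proof (pow2_ge_0 (Q2R xQ)).
    assert (0 < (- Q2R A) ^ 3) by (apply pow_lt; lra). nra. }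
  set (M := Rmax (hQ (jE A B)) (hQ (discE A B))).
  assert (HM0 : 0 <= M) by (apply Rle_trans with (hQ (jE A B)); [apply hQ_nonneg | apply Rmax_l]).
  unfold hE. fold M.
  destruct (Req_dec (Q2R xQ) 0) as [Hx0 | Hx0].
  - rewrite Hx0, Rabs_R0, ln_0. lra.
  - assert (ln (Rabs (Q2R xQ)) <= M / 3); [|lra].
    apply (ln_abs_le_of_sixth_power _ (Q2R (jE A B)) (Q2R (discE A B))); auto.
    + exact (sixth_power_le_j_disc _ _ _ _ Hx2 HjD).
    + apply Rle_trans with (hQ (jE A B)); [apply ln_abs_le_hQ, Hj | apply Rmax_l].
    + apply Rle_trans with (hQ (discE A B)); [apply ln_abs_le_hQ, HD | apply Rmax_r].
Qed.
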